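(* Let $(\mathcal{X},\preceq)$ be an $\omega$-chain complete partially ordered set and $\Lambda$ a set. For finite disjoint $\mathcal{I},\mathcal{O}\subseteq\Lambda$ let $\mathfrak{N}_{\mathcal{I},\mathcal{O}}$ be the set of all $\omega$-continuous functions $\mathcal{X}^{\mathcal{I}}\to\mathcal{X}^{\mathcal{O}}$, and $\mathfrak{N}$ their union. For $s\in\mathfrak{N}_{\mathcal{I},\mathcal{O}}$ let $\Gamma(s)=\{\{i,o\}\mid i\in\mathcal{I},o\in\mathcal{O}\}$ and let $\phi^s_{i,o}(\mathbf{x})$ be the least $x_i\in\mathcal{X}$ with $s(\mathbf{x}\cup\{(i,x_i)\})(o)=x_i$. Then the resulting structure $(\mathfrak{N},\lambda,\parallel,\Gamma,\gamma)$ is a functional $\Lambda$-system algebra over $\mathcal{X}$; in particular, $\mathfrak{N}$ is closed under parallel composition and $\gamma_{i,o}(s)\in\mathfrak{N}_{\mathcal{I}\setminus\{i\},\mathcal{O}\setminus\{o\}}$ for all $s\in\mathfrak{N}_{\mathcal{I},\mathcal{O}}$, $i\in\mathcal{I}$, $o\in\mathcal{O}$.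
   Context: An $\omega$-chain is a sequence $(x_n)_{n\in\mathbb{N}}$ with $x_i\preceq x_j$ for $i\le j$; an $\omega$-CPO is a poset with least element in which every $\omega$-chain has a supremum. $\mathcal{X}^{\mathcal{I}}$ (functions $\mathcal{I}\to\mathcal{X}$) is ordered componentwise. $f$ is $\omega$-continuous if for every $\omega$-chain $C$, $\sup f(C)$ exists and equals $f(\sup C)$; such least fixed points exist. Operations: $\lambda(s)=\mathcal{I}\cup\mathcal{O}$; for $s_j\in\mathfrak{N}_{\mathcal{I}_j,\mathcal{O}_j}$ with the four index sets pairwise disjoint, $(s_1\parallel s_2)(\mathbf{x})(o_j)=s_j(\mathbf{x}|_{\mathcal{I}_j})(o_j)$ for $o_j\in\mathcal{O}_j$; $\gamma_{i,o}(s)(\mathbf{x})=s(\mathbf{x}\cup\{(i,\phi^s_{i,o}(\mathbf{x}))\})|_{\mathcal{O}\setminus\{o\}}$ for $\mathbf{x}\in\mathcal{X}^{\mathcal{I}\setminus\{i\}}$. A functional $\Lambda$-system algebra over $\mathcal{X}$ is such a structure whose system set is closed under $\parallel$ and $\gamma$ and in which, for systems with disjoint interface sets, $\{i,o\}\in\Gamma(s_1\parallel s_2)\iff\{i,o\}\in\Gamma(s_j)$ for $i,o\in\lambda(s_j)$. *)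

From Stdlib Require Import ClassicalEpsilon List.


(** Subsets of an index set Λ are predicates; [sub I] is the index type of X^I. *)
Definition sub {L : Type} (I : L -> Prop) : Type := {l : L | I l}.

Definition finite_set {L : Type} (I : L -> Prop) : Prop :=
  exists s : list L, forall l, I l -> In l s.
Definition disjoint {L : Type} (I O : L -> Prop) : Prop :=
  forall l, I l -> O l -> False.
Definition setU {L : Type} (A B : L -> Prop) : L -> Prop := fun l => A l \/ B l.
Definition setD1 {L : Type} (A : L -> Prop) (a : L) : L -> Prop :=
  fun l => A l /\ l <> a.

Definition pw_le {A X : Type} (le : X -> X -> Prop) (f g : A -> X) : Prop :=
  forall a, le (f a) (g a).
Definition is_chain {Y : Type} (le : Y -> Y -> Prop) (c : nat -> Y) : Prop :=
  forall m n, m <= n -> le (c m) (c n).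
Definition is_sup {Y : Type} (le : Y -> Y -> Prop) (c : nat -> Y) (s : Y) : Prop :=
  (forall n, le (c n) s) /\ (forall u, (forall n, le (c n) u) -> le s u).

Definition omega_cpo {X : Type} (le : X -> X -> Prop) (bot : X) : Prop :=
  (forall x, le x x) /\
  (forall x y, le x y -> le y x -> x = y) /\
  (forall x y z, le x y -> le y z -> le x z) /\
  (forall x, le bot x) /\
  (forall c, is_chain le c -> exists s, is_sup le c s).

Definition omega_continuous {Y Z : Type} (leY : Y -> Y -> Prop) (leZ : Z -> Z -> Prop)
  (f : Y -> Z) : Prop :=
  forall c, is_chain leY c -> forall s, is_sup leY c s ->
    is_sup leZ (fun n => f (c n)) (f s).

Definition NIO {X L : Type} (le : X -> X -> Prop) (I O : L -> Prop)
  (f : (sub I -> X) -> (sub O -> X)) : Prop :=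
  finite_set I /\ finite_set O /\ disjoint I O /\
  omega_continuous (pw_le le) (pw_le le) f.

Definition lambda {L : Type} (I O : L -> Prop) : L -> Prop := setU I O.
Definition Gamma {L : Type} (I O : L -> Prop) (a b : L) : Prop :=
  exists i o, I i /\ O o /\ ((a = i /\ b = o) \/ (a = o /\ b = i)).

Definition restrict_l {X L : Type} {I1 I2 : L -> Prop} (x : sub (setU I1 I2) -> X)
  : sub I1 -> X :=
  fun p => x (exist _ (proj1_sig p) (or_introl (proj2_sig p))).
Definition restrict_r {X L : Type} {I1 I2 : L -> Prop} (x : sub (setU I1 I2) -> X)
  : sub I2 -> X :=
  fun p => x (exist _ (proj1_sig p) (or_intror (proj2_sig p))).
Definition or_right_of {A B : Prop} (h : A \/ B) (n : ~ A) : B :=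
  match h with or_introl a => False_ind B (n a) | or_intror b => b end.

Definition par {X L : Type} {I1 O1 I2 O2 : L -> Prop}
  (f1 : (sub I1 -> X) -> (sub O1 -> X)) (f2 : (sub I2 -> X) -> (sub O2 -> X))
  : (sub (setU I1 I2) -> X) -> (sub (setU O1 O2) -> X) :=
  fun x p =>
    match excluded_middle_informative (O1 (proj1_sig p)) with
    | left h => f1 (restrict_l x) (exist _ (proj1_sig p) h)
    | right h => f2 (restrict_r x) (exist _ (proj1_sig p) (or_right_of (proj2_sig p) h))
    end.

Definition extend {X L : Type} {I : L -> Prop} {i : L}
  (x : sub (setD1 I i) -> X) (xi : X) : sub I -> X :=
  fun p =>
    match excluded_middle_informative (proj1_sig p = i) with
    | left _ => xi
    | right h => x (exist _ (proj1_sig p) (conj (proj2_sig p) h))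
    end.

Definition is_fixpt {X L : Type} {I O : L -> Prop}
  (f : (sub I -> X) -> (sub O -> X)) (i o : L) (x : sub (setD1 I i) -> X) (y : X) : Prop :=
  exists ho : O o, f (extend x y) (exist _ o ho) = y.

(** phi^s_{i,o}(x): the least such fixed point (chosen by epsilon; the
    inhabitant bot is only used to make epsilon total). *)
Definition phi {X L : Type} (le : X -> X -> Prop) (bot : X) {I O : L -> Prop}
  (f : (sub I -> X) -> (sub O -> X)) (i o : L) (x : sub (setD1 I i) -> X) : X :=
  epsilon (inhabits bot)
    (fun y => is_fixpt f i o x y /\ forall z, is_fixpt f i o x z -> le y z).

Definition gamma {X L : Type} (le : X -> X -> Prop) (bot : X) {I O : L -> Prop}
  (i o : L) (f : (sub I -> X) -> (sub O -> X))
  : (sub (setD1 I i) -> X) -> (sub (setD1 O o) -> X) :=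
  fun x p => f (extend x (phi le bot f i o x)) (exist _ (proj1_sig p) (proj1 (proj2_sig p))).

Definition functional_system_algebra {X : Type} (le : X -> X -> Prop) (bot : X)
  (L : Type) : Prop :=
  (forall (I1 O1 I2 O2 : L -> Prop) f1 f2,
      NIO le I1 O1 f1 -> NIO le I2 O2 f2 ->
      disjoint (lambda I1 O1) (lambda I2 O2) ->
      NIO le (setU I1 I2) (setU O1 O2) (par f1 f2)) /\
  (forall (I O : L -> Prop) f (i o : L),
      NIO le I O f -> I i -> O o ->
      NIO le (setD1 I i) (setD1 O o) (gamma le bot i o f)) /\
  (forall (I1 O1 I2 O2 : L -> Prop) f1 f2,
      NIO le I1 O1 f1 -> NIO le I2 O2 f2 ->
      disjoint (lambda I1 O1) (lambda I2 O2) ->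
      (forall a b, lambda I1 O1 a -> lambda I1 O1 b ->
         (Gamma (setU I1 I2) (setU O1 O2) a b <-> Gamma I1 O1 a b)) /\
      (forall a b, lambda I2 O2 a -> lambda I2 O2 b ->
         (Gamma (setU I1 I2) (setU O1 O2) a b <-> Gamma I2 O2 a b))).

From Stdlib Require Import ClassicalEpsilon List ProofIrrelevance FunctionalExtensionality Lia.

(* Parallel composition is continuous because each output of [s1 || s2] is an
   output of s1 or of s2 precomposed with a restriction of the inputs.  For
   feedback, [phi^s_{i,o}(x)] is the least fixed point of the jointly
   continuous map [y |-> s(x U {(i,y)})(o)]; by Kleene it is the supremum of
   the iterates from bot and also the least prefixed point, and the least
   prefixed point of a jointly continuous family depends continuously on the
   parameter.  So gamma_{i,o}(s) is a composite of continuous maps.  The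
   conditions on Gamma only use the disjointness of the interfaces. *)

Section Sups.
Context {X : Type} (le : X -> X -> Prop).

Lemma is_sup_pw_iff {A : Type} (c : nat -> A -> X) (s : A -> X) :
  is_sup (pw_le le) c s <-> forall a, is_sup le (fun n => c n a) (s a).
Proof.
  split.
  - intros [Hub Hleast] a. split; [intro n; apply Hub|].
    intros u Hu.
    (* [s] with its [a]-component replaced by [u] is an upper bound of [c] *)
    set (s' := fun b => match excluded_middle_informative (b = a) with
                        | left _ => u | right _ => s b end).
    assert (Hss' : pw_le le s s').
    { apply Hleast. intros n b. unfold s'.
      destruct (excluded_middle_informative (b = a)) as [->|]; [apply Hu | apply Hub]. }
    specialize (Hss' a). unfold s' in Hss'.
    destruct (excluded_middle_informative (a = a)); [exact Hss' | congruence].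
  - intros H. split.
    + intros n a. apply (proj1 (H a)).
    + intros u Hu a. apply (proj2 (H a)). intro n. apply Hu.
Qed.

Lemma omega_continuous_pw_iff {Y B : Type} (leY : Y -> Y -> Prop) (f : Y -> B -> X) :
  omega_continuous leY (pw_le le) f <->
  forall b, omega_continuous leY le (fun y => f y b).
Proof.
  split.
  - intros Hf b c Hc s Hs. exact (proj1 (is_sup_pw_iff _ _) (Hf c Hc s Hs) b).
  - intros Hf c Hc s Hs. apply is_sup_pw_iff. intro b. exact (Hf b c Hc s Hs).
Qed.

Lemma omega_continuous_precomp {A B Z : Type} (leZ : Z -> Z -> Prop)
  (h : B -> A) (f : (B -> X) -> Z) :
  omega_continuous (pw_le le) leZ f ->
  omega_continuous (pw_le le) leZ (fun x => f (fun b => x (h b))).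
Proof.
  intros Hf c Hc s Hs. apply (Hf (fun n b => c n (h b))).
  - intros m n Hmn b. apply Hc, Hmn.
  - apply is_sup_pw_iff. intro b. exact (proj1 (is_sup_pw_iff c s) Hs (h b)).
Qed.

Hypothesis le_refl : forall x, le x x.

Lemma is_chain_const (x : X) : is_chain le (fun _ => x).
Proof. intros m n _. apply le_refl. Qed.

Lemma is_sup_const (x : X) : is_sup le (fun _ => x) x.
Proof. split; [intro; apply le_refl | intros u Hu; apply (Hu 0)]. Qed.

Definition two_step (x y : X) (n : nat) : X := match n with 0 => x | S _ => y end.

Lemma is_chain_two_step (x y : X) : le x y -> is_chain le (two_step x y).
Proof. intros Hxy [|m] [|n] Hmn; simpl; auto; lia. Qed.

Lemma is_sup_two_step (x y : X) : le x y -> is_sup le (two_step x y) y.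
Proof. intros Hxy. split; [intros [|n]; simpl; auto | intros u Hu; apply (Hu 1)]. Qed.

End Sups.

Lemma omega_continuous_monotone {Y Z : Type} (leY : Y -> Y -> Prop)
  (leZ : Z -> Z -> Prop) (f : Y -> Z) :
  (forall y, leY y y) -> omega_continuous leY leZ f ->
  forall x y, leY x y -> leZ (f x) (f y).
Proof.
  intros HreflY Hf x y Hxy.
  exact (proj1 (Hf _ (is_chain_two_step _ HreflY _ _ Hxy) _
                  (is_sup_two_step _ HreflY _ _ Hxy)) 0).
Qed.

Section LeastPrefixpoint.
Context {X : Type} (le : X -> X -> Prop) (bot : X) (Hcpo : omega_cpo le bot).

Let le_refl : forall x, le x x := proj1 Hcpo.
Let le_anti : forall x y, le x y -> le y x -> x = y := proj1 (proj2 Hcpo).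
Let le_trans : forall x y z, le x y -> le y z -> le x z :=
  proj1 (proj2 (proj2 Hcpo)).
Let bot_le : forall x, le bot x := proj1 (proj2 (proj2 (proj2 Hcpo))).
Let chain_sup : forall c, is_chain le c -> exists s, is_sup le c s :=
  proj2 (proj2 (proj2 (proj2 Hcpo))).

Definition least_prefixpoint (h : X -> X) (y : X) : Prop :=
  h y = y /\ forall z, le (h z) z -> le y z.

Lemma is_sup_unique (c : nat -> X) (s t : X) :
  is_sup le c s -> is_sup le c t -> s = t.
Proof. intros [Hs1 Hs2] [Ht1 Ht2]. apply le_anti; [apply Hs2 | apply Ht2]; assumption. Qed.

Lemma is_chain_of_step (c : nat -> X) :
  (forall n, le (c n) (c (S n))) -> is_chain le c.
Proof.
  intros Hstep m n Hmn. induction Hmn; [apply le_refl | eapply le_trans; eauto].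
Qed.

Lemma is_sup_shift (c : nat -> X) (s : X) :
  is_chain le c -> is_sup le c s -> is_sup le (fun n => c (S n)) s.
Proof.
  intros Hc [Hub Hleast]. split; [intro; apply Hub|].
  intros u Hu. apply Hleast. intro n.
  apply (le_trans _ (c (S n))); [apply Hc; lia | apply Hu].
Qed.

Lemma kleene_least_prefixpoint (h : X -> X) :
  omega_continuous le le h -> exists y, least_prefixpoint h y.
Proof.
  intros Hh.
  assert (Hmono := omega_continuous_monotone le le h le_refl Hh).
  set (it := fun n => Nat.iter n h bot).
  assert (Hit : is_chain le it).
  { apply is_chain_of_step. intro n. induction n; simpl; [apply bot_le | apply Hmono, IHn]. }
  destruct (chain_sup it Hit) as [p Hp].
  exists p. split.
  - apply (is_sup_unique (fun n => it (S n))); [exact (Hh it Hit p Hp) | apply is_sup_shift; auto].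
  - intros z Hz. apply (proj2 Hp). intro n. induction n; simpl; [apply bot_le|].
    eapply le_trans; [apply Hmono, IHn | exact Hz].
Qed.

Section Parametric.
Context {Y : Type} (leY : Y -> Y -> Prop) (leY_refl : forall y, leY y y)
  (g : Y -> X -> X).

Hypothesis is_sup_g : forall c d s q,
  is_chain leY c -> is_chain le d -> is_sup leY c s -> is_sup le d q ->
  is_sup le (fun n => g (c n) (d n)) (g s q).

Lemma jointly_continuous_monotone (p p' : Y) (x x' : X) :
  leY p p' -> le x x' -> le (g p x) (g p' x').
Proof.
  intros Hp Hx.
  exact (proj1 (is_sup_g _ _ _ _
    (is_chain_two_step _ leY_refl _ _ Hp) (is_chain_two_step _ le_refl _ _ Hx)
    (is_sup_two_step _ leY_refl _ _ Hp) (is_sup_two_step _ le_refl _ _ Hx)) 0).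
Qed.

Lemma jointly_continuous_section (p : Y) : omega_continuous le le (g p).
Proof.
  intros d Hd q Hq.
  exact (is_sup_g _ _ _ _ (is_chain_const _ leY_refl p) Hd (is_sup_const _ leY_refl p) Hq).
Qed.

Variable F : Y -> X.
Hypothesis F_lpp : forall p, least_prefixpoint (g p) (F p).

Lemma least_prefixpoint_monotone (p p' : Y) : leY p p' -> le (F p) (F p').
Proof.
  intros Hp. apply (proj2 (F_lpp p)).
  rewrite <- (proj1 (F_lpp p')) at 2.
  apply jointly_continuous_monotone; auto.
Qed.

Lemma least_prefixpoint_continuous : omega_continuous leY le F.
Proof.
  intros c Hc s Hs.
  assert (Hd : is_chain le (fun n => F (c n))).
  { intros m n Hmn. apply least_prefixpoint_monotone, Hc, Hmn. }
  destruct (chain_sup _ Hd) as [q Hq].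
  (* [q] is a fixed point of [g s]: it is the supremum of [g (c n) (F (c n)) = F (c n)] *)
  assert (Hfix : g s q = q).
  { apply (is_sup_unique (fun n => F (c n))); [|exact Hq].
    assert (Hsup := is_sup_g _ _ _ _ Hc Hd Hs Hq).
    replace (fun n => F (c n)) with (fun n => g (c n) (F (c n))); [exact Hsup|].
    apply functional_extensionality_dep. intro n. apply F_lpp. }
  replace (F s) with q; [exact Hq|].
  apply le_anti.
  - apply (proj2 Hq). intro n. apply least_prefixpoint_monotone, (proj1 Hs).
  - apply (proj2 (F_lpp s)). rewrite Hfix. apply le_refl.
Qed.

End Parametric.
End LeastPrefixpoint.

Section Extend.
Context {X L : Type} (le : X -> X -> Prop) {I : L -> Prop} {i : L}.

Lemma extend_monotone (x x' : sub (setD1 I i) -> X) (y y' : X) :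
  pw_le le x x' -> le y y' -> pw_le le (extend x y) (extend x' y').
Proof.
  intros Hx Hy p. unfold extend.
  destruct (excluded_middle_informative (proj1_sig p = i)); auto.
Qed.

Lemma is_sup_extend (c : nat -> sub (setD1 I i) -> X) (d : nat -> X) s q :
  is_sup (pw_le le) c s -> is_sup le d q ->
  is_sup (pw_le le) (fun n => extend (c n) (d n)) (extend s q).
Proof.
  intros Hs Hq. apply is_sup_pw_iff. intro p. unfold extend.
  destruct (excluded_middle_informative (proj1_sig p = i)); auto.
  apply (proj1 (is_sup_pw_iff le _ _) Hs).
Qed.

End Extend.

Section Feedback.
Context {X L : Type} (le : X -> X -> Prop) (bot : X) (Hcpo : omega_cpo le bot)
  {I O : L -> Prop} (f : (sub I -> X) -> (sub O -> X))
  (Hf : omega_continuous (pw_le le) (pw_le le) f) (i o : L) (Ho : O o).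

Let le_refl : forall x, le x x := proj1 Hcpo.
Let le_anti : forall x y, le x y -> le y x -> x = y := proj1 (proj2 Hcpo).
Let pw_refl : forall A (x : A -> X), pw_le le x x := fun _ x a => le_refl (x a).

Definition feedback_loop (x : sub (setD1 I i) -> X) (y : X) : X :=
  f (extend x y) (exist _ o Ho).

Lemma is_sup_feedback_loop c d s q :
  is_chain (pw_le le) c -> is_chain le d -> is_sup (pw_le le) c s -> is_sup le d q ->
  is_sup le (fun n => feedback_loop (c n) (d n)) (feedback_loop s q).
Proof.
  intros Hc Hd Hs Hq.
  assert (Hext : is_chain (pw_le le) (fun n => extend (c n) (d n))).
  { intros m n Hmn. apply extend_monotone; [apply Hc | apply Hd]; exact Hmn. }
  exact (proj1 (is_sup_pw_iff le _ _) (Hf _ Hext _ (is_sup_extend le c d s q Hs Hq)) _).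
Qed.

Lemma is_fixpt_iff x y : is_fixpt f i o x y <-> feedback_loop x y = y.
Proof.
  split; [intros [ho Hy] | intro Hy; exists Ho; exact Hy].
  unfold feedback_loop. rewrite (proof_irrelevance _ Ho ho). exact Hy.
Qed.

Lemma phi_least_prefixpoint x :
  least_prefixpoint le (feedback_loop x) (phi le bot f i o x).
Proof.
  destruct (kleene_least_prefixpoint le bot Hcpo (feedback_loop x)
              (jointly_continuous_section le (pw_le le) (pw_refl _) _ is_sup_feedback_loop x))
    as [y [Hyfix Hyleast]].
  assert (Hphi : is_fixpt f i o x (phi le bot f i o x) /\
                 forall z, is_fixpt f i o x z -> le (phi le bot f i o x) z).
  { unfold phi. apply epsilon_spec. exists y. split; [apply is_fixpt_iff, Hyfix|].
    intros z Hz. apply Hyleast. rewrite (proj1 (is_fixpt_iff x z) Hz). apply le_refl. }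
  replace (phi le bot f i o x) with y; [split; assumption|].
  destruct Hphi as [Hphi_fix Hphi_least]. apply le_anti.
  - apply Hyleast. rewrite (proj1 (is_fixpt_iff _ _) Hphi_fix). apply le_refl.
  - apply Hphi_least, is_fixpt_iff, Hyfix.
Qed.

Lemma omega_continuous_gamma :
  omega_continuous (pw_le le) (pw_le le) (gamma le bot i o f).
Proof.
  intros c Hc s Hs.
  assert (Hphi := least_prefixpoint_continuous le bot Hcpo (pw_le le) (pw_refl _) _
                    is_sup_feedback_loop _ phi_least_prefixpoint).
  assert (Hd : is_chain le (fun n => phi le bot f i o (c n))).
  { intros m n Hmn.
    apply (omega_continuous_monotone _ _ _ (pw_refl _) Hphi), Hc, Hmn. }
  assert (Hext : is_chain (pw_le le) (fun n => extend (c n) (phi le bot f i o (c n)))).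
  { intros m n Hmn. apply extend_monotone; [apply Hc | apply Hd]; exact Hmn. }
  apply is_sup_pw_iff. intro p. unfold gamma.
  exact (proj1 (is_sup_pw_iff le _ _)
           (Hf _ Hext _ (is_sup_extend le _ _ _ _ Hs (Hphi c Hc s Hs))) _).
Qed.

End Feedback.

Section Parallel.
Context {X L : Type} (le : X -> X -> Prop) {I1 O1 I2 O2 : L -> Prop}
  (f1 : (sub I1 -> X) -> (sub O1 -> X)) (f2 : (sub I2 -> X) -> (sub O2 -> X)).

Lemma omega_continuous_par :
  omega_continuous (pw_le le) (pw_le le) f1 ->
  omega_continuous (pw_le le) (pw_le le) f2 ->
  omega_continuous (pw_le le) (pw_le le) (par f1 f2).
Proof.
  intros Hf1 Hf2. apply omega_continuous_pw_iff. intro p. unfold par.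
  destruct (excluded_middle_informative (O1 (proj1_sig p))) as [h|h].
  - exact (omega_continuous_precomp le _ _ (fun x => f1 x _)
             (proj1 (omega_continuous_pw_iff le _ f1) Hf1 _)).
  - exact (omega_continuous_precomp le _ _ (fun x => f2 x _)
             (proj1 (omega_continuous_pw_iff le _ f2) Hf2 _)).
Qed.

End Parallel.

Lemma finite_setU {L : Type} (A B : L -> Prop) :
  finite_set A -> finite_set B -> finite_set (setU A B).
Proof.
  intros [s1 H1] [s2 H2]. exists (s1 ++ s2). intros l [h|h]; apply in_or_app; auto.
Qed.

Lemma finite_setD1 {L : Type} (A : L -> Prop) (a : L) :
  finite_set A -> finite_set (setD1 A a).
Proof. intros [s H]. exists s. intros l [h _]. auto. Qed.

Lemma disjoint_setU {L : Type} (I1 O1 I2 O2 : L -> Prop) :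
  disjoint I1 O1 -> disjoint I2 O2 -> disjoint (lambda I1 O1) (lambda I2 O2) ->
  disjoint (setU I1 I2) (setU O1 O2).
Proof.
  intros D1 D2 D l [h|h] [h'|h'].
  - exact (D1 l h h').
  - exact (D l (or_introl h) (or_intror h')).
  - exact (D l (or_intror h') (or_introl h)).
  - exact (D2 l h h').
Qed.

Lemma disjoint_setD1 {L : Type} (I O : L -> Prop) (i o : L) :
  disjoint I O -> disjoint (setD1 I i) (setD1 O o).
Proof. intros D l [h _] [h' _]. exact (D l h h'). Qed.

Lemma NIO_par {X L : Type} (le : X -> X -> Prop) (I1 O1 I2 O2 : L -> Prop) f1 f2 :
  NIO le I1 O1 f1 -> NIO le I2 O2 f2 -> disjoint (lambda I1 O1) (lambda I2 O2) ->
  NIO le (setU I1 I2) (setU O1 O2) (par f1 f2).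
Proof.
  intros (FI1 & FO1 & D1 & C1) (FI2 & FO2 & D2 & C2) D.
  refine (conj (finite_setU _ _ FI1 FI2) (conj (finite_setU _ _ FO1 FO2)
                 (conj (disjoint_setU _ _ _ _ D1 D2 D) _))).
  exact (omega_continuous_par le f1 f2 C1 C2).
Qed.

Lemma NIO_gamma {X L : Type} (le : X -> X -> Prop) (bot : X) (Hcpo : omega_cpo le bot)
  (I O : L -> Prop) f (i o : L) :
  NIO le I O f -> O o -> NIO le (setD1 I i) (setD1 O o) (gamma le bot i o f).
Proof.
  intros (FI & FO & D & C) Ho.
  refine (conj (finite_setD1 _ _ FI) (conj (finite_setD1 _ _ FO)
                 (conj (disjoint_setD1 _ _ _ _ D) _))).
  exact (omega_continuous_gamma le bot Hcpo f C i o Ho).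
Qed.

Lemma Gamma_superset_iff {L : Type} (I O I' O' : L -> Prop) (a b : L) :
  (forall l, I l -> I' l) -> (forall l, O l -> O' l) ->
  (forall l, lambda I O l -> I' l -> I l) -> (forall l, lambda I O l -> O' l -> O l) ->
  lambda I O a -> lambda I O b -> (Gamma I' O' a b <-> Gamma I O a b).
Proof.
  intros HI HO HI' HO' Ha Hb.
  split; intros (i0 & o0 & Hi & Ho & Hab); exists i0, o0; repeat split; auto;
    destruct Hab as [[-> ->]|[-> ->]]; auto.
Qed.

Lemma Gamma_par_l {L : Type} (I1 O1 I2 O2 : L -> Prop) (a b : L) :
  disjoint (lambda I1 O1) (lambda I2 O2) -> lambda I1 O1 a -> lambda I1 O1 b ->
  (Gamma (setU I1 I2) (setU O1 O2) a b <-> Gamma I1 O1 a b).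
Proof.
  intros D. apply Gamma_superset_iff.
  - intros l h. left. exact h.
  - intros l h. left. exact h.
  - intros l Hl [h|h]; [exact h | destruct (D l Hl (or_introl h))].
  - intros l Hl [h|h]; [exact h | destruct (D l Hl (or_intror h))].
Qed.

Lemma Gamma_par_r {L : Type} (I1 O1 I2 O2 : L -> Prop) (a b : L) :
  disjoint (lambda I1 O1) (lambda I2 O2) -> lambda I2 O2 a -> lambda I2 O2 b ->
  (Gamma (setU I1 I2) (setU O1 O2) a b <-> Gamma I2 O2 a b).
Proof.
  intros D. apply Gamma_superset_iff.
  - intros l h. right. exact h.
  - intros l h. right. exact h.
  - intros l Hl [h|h]; [destruct (D l (or_introl h) Hl) | exact h].
  - intros l Hl [h|h]; [destruct (D l (or_intror h) Hl) | exact h].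
Qed.

Theorem theorem5p6 (X : Type) (le : X -> X -> Prop) (bot : X)
  (Hcpo : omega_cpo le bot) (L : Type) :
  functional_system_algebra le bot L.
Proof.
  split; [|split].
  - exact (NIO_par le).
  - intros I O f i o Hf _ Ho. exact (NIO_gamma le bot Hcpo I O f i o Hf Ho).
  - intros I1 O1 I2 O2 f1 f2 _ _ D.
    split; intros a b; [exact (Gamma_par_l I1 O1 I2 O2 a b D) | exact (Gamma_par_r I1 O1 I2 O2 a b D)].
Qed.
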